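(* Let $n\ge 3$, let $t$ be an indeterminate, and let $\rho'_S: SB_n\to GL_n(\mathbb{Z}[t^{\pm1}])$ be any representation extending the standard representation $\rho_S: B_n\to GL_n(\mathbb{Z}[t^{\pm1}])$ (equivalently, by the classification of such extensions, one given for some $a,c\in\mathbb{Z}[t^{\pm1}]$ by $\rho'_S(\sigma_i)=\mathrm{diag}(I_{i-1},\begin{pmatrix}0&t\\1&0\end{pmatrix},I_{n-i-1})$ and $\rho'_S(\tau_i)=\mathrm{diag}(I_{i-1},\begin{pmatrix}a&ct\\c&a\end{pmatrix},I_{n-i-1})$). Then $\rho'_S$ is not faithful.
   Context: $I_r$ is the $r\times r$ identity matrix. $B_n$ is the braid group with generators $\sigma_1,\dots,\sigma_{n-1}$ and relations $\sigma_i\sigma_{i+1}\sigma_i=\sigma_{i+1}\sigma_i\sigma_{i+1}$, $\sigma_i\sigma_j=\sigma_j\sigma_i$ ($|i-j|\ge2$). The singular braid group $SB_n\supset B_n$ is generated by $\sigma_1,\dots,\sigma_{n-1},\tau_1,\dots,\tau_{n-1}$ subject to the braid relations together with $\tau_i\tau_j=\tau_j\tau_i$, $\tau_i\sigma_j=\sigma_j\tau_i$ ($|i-j|\ge2$), $\tau_i\sigma_i=\sigma_i\tau_i$, $\sigma_i\sigma_{i+1}\tau_i=\tau_{i+1}\sigma_i\sigma_{i+1}$, $\sigma_{i+1}\sigma_i\tau_{i+1}=\tau_i\sigma_{i+1}\sigma_i$. The standard representation $\rho_S$ sends $\sigma_i$ to $\mathrm{diag}(I_{i-1},\begin{pmatrix}0&t\\1&0\end{pmatrix},I_{n-i-1})$.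 *)

From HB Require Import structures.
From mathcomp Require Import all_boot all_order all_algebra.
Set Implicit Arguments. Unset Strict Implicit. Unset Printing Implicit Defensive.
Import Order.TTheory GRing.Theory Num.Theory.


(** * Coefficients: Z[t^{+-1}] inside the fraction field Q(t) = {fraction {poly int}} *)
Definition Kt := {fraction {poly int}}.
Local Open Scope ring_scope.
Definition tK : Kt := tofrac ('X : {poly int}).
Definition laurent (x : Kt) : Prop :=
  exists (p : {poly int}) (k : nat), x = tofrac p / tK ^+ k.
Definition laurent_mx n (A : 'M[Kt]_n) : Prop := forall i j, laurent (A i j).
Definition GL_laurent n (A : 'M[Kt]_n) : Prop :=
  [/\ A \in unitmx, laurent_mx A & laurent_mx (invmx A)].

Local Close Scope ring_scope.
(** * Words in the generators of SB_n (0-based indices: Sig i is sigma_(i+1)). *)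
Inductive gen := Sig of nat | Tau of nat.
(** a letter is a generator together with an "inverse" flag *)
Definition letter := (gen * bool)%type.
Definition ltr (g : gen) : letter := (g, false).
Definition linv (x : letter) : letter := (x.1, ~~ x.2).
Definition gidx (g : gen) : nat := match g with Sig i => i | Tau i => i end.
Definition valid_word (n : nat) (w : seq letter) : Prop :=
  all (fun x : letter => (gidx x.1).+1 < n)%N w.

Definition far (i j : nat) : bool := (i.+1 < j) || (j.+1 < i).

Inductive sb_rel (n : nat) : seq letter -> seq letter -> Prop :=
| R_cancl x : (gidx x.1).+1 < n -> sb_rel n [:: x; linv x] [::]
| R_braid i : i.+2 < n ->
    sb_rel n [:: ltr (Sig i); ltr (Sig i.+1); ltr (Sig i)]
             [:: ltr (Sig i.+1); ltr (Sig i); ltr (Sig i.+1)]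
| R_ss i j : i.+1 < n -> j.+1 < n -> far i j ->
    sb_rel n [:: ltr (Sig i); ltr (Sig j)] [:: ltr (Sig j); ltr (Sig i)]
| R_tt i j : i.+1 < n -> j.+1 < n -> far i j ->
    sb_rel n [:: ltr (Tau i); ltr (Tau j)] [:: ltr (Tau j); ltr (Tau i)]
| R_ts i j : i.+1 < n -> j.+1 < n -> far i j ->
    sb_rel n [:: ltr (Tau i); ltr (Sig j)] [:: ltr (Sig j); ltr (Tau i)]
| R_ts_same i : i.+1 < n ->
    sb_rel n [:: ltr (Tau i); ltr (Sig i)] [:: ltr (Sig i); ltr (Tau i)]
| R_mix1 i : i.+2 < n ->
    sb_rel n [:: ltr (Sig i); ltr (Sig i.+1); ltr (Tau i)]
             [:: ltr (Tau i.+1); ltr (Sig i); ltr (Sig i.+1)]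
| R_mix2 i : i.+2 < n ->
    sb_rel n [:: ltr (Sig i.+1); ltr (Sig i); ltr (Tau i.+1)]
             [:: ltr (Tau i); ltr (Sig i.+1); ltr (Sig i)].

Inductive sb_eq (n : nat) : seq letter -> seq letter -> Prop :=
| sbe_rel u v w w' : sb_rel n w w' -> sb_eq n (u ++ w ++ v) (u ++ w' ++ v)
| sbe_refl w : sb_eq n w w
| sbe_sym w w' : sb_eq n w w' -> sb_eq n w' w
| sbe_trans w1 w2 w3 : sb_eq n w1 w2 -> sb_eq n w2 w3 -> sb_eq n w1 w3.

Local Open Scope ring_scope.
(** * Standard representation matrix of sigma_(i+1): diag(I_i, [[0,t],[1,0]], I) *)
Definition std_sigma (n i : nat) : 'M[Kt]_n :=
  \matrix_(r < n, c < n)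
    if (r == i :> nat) && (c == i.+1 :> nat) then tK
    else if (r == i.+1 :> nat) && (c == i :> nat) then 1
    else if ((r == i :> nat) || (r == i.+1 :> nat)) then 0
    else (r == c)%:R.

Definition gen_mx n (T : nat -> 'M[Kt]_n) (g : gen) : 'M[Kt]_n :=
  match g with Sig i => std_sigma n i | Tau i => T i end.
Definition letter_mx n (T : nat -> 'M[Kt]_n) (x : letter) : 'M[Kt]_n :=
  if x.2 then invmx (gen_mx T x.1) else gen_mx T x.1.
Definition word_mx n (T : nat -> 'M[Kt]_n) (w : seq letter) : 'M[Kt]_n :=
  foldr (fun x acc => letter_mx T x *m acc) 1%:M w.

Definition extends_std_rep (n : nat) (T : nat -> 'M[Kt]_n) : Prop :=
  (forall i, (i.+1 < n)%N -> GL_laurent (T i)) /\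
  (forall w w', sb_rel n w w' -> word_mx T w = word_mx T w').

Definition faithful_rep (n : nat) (T : nat -> 'M[Kt]_n) : Prop :=
  forall w w', valid_word n w -> valid_word n w' ->
    word_mx T w = word_mx T w' -> sb_eq n w w'.

(** The images of σ₁² and σ₂² under ρ'_S are diagonal matrices, so they
    commute.  In SB_n, however, σ₁²σ₂² ≠ σ₂²σ₁²: sending every τ_i to σ_i
    retracts SB_n onto B_n, and in the unreduced Burau representation of B_n
    at t = -1 the two words already act differently on the first basis
    vector. *)

From mathcomp Require Import all_boot all_order all_algebra all_fingroup.
From mathcomp Require Import zify.
Import GRing.Theory.

Local Open Scope ring_scope.

Section StdSigmaSquare.

Variables (n i : nat).
Hypothesis lt_i1n : (i.+1 < n)%N.

Let i0 : 'I_n := Ordinal (ltnW lt_i1n).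
Let i1 : 'I_n := Ordinal lt_i1n.
Let d (r : 'I_n) : Kt := if r == i0 then tK else 1.

Let i0_neq_i1 : i0 != i1.
Proof. by rewrite -val_eqE /= ltn_eqF. Qed.

Lemma std_sigmaE r c : std_sigma n i r c = d r * (tperm i0 i1 r == c)%:R.
Proof.
rewrite mxE /d -[i.+1]/(val i1) -[i]/(val i0) !val_eqE.
have [->|r_ne0] := eqVneq r i0.
  by rewrite tpermL (negbTE i0_neq_i1) /= eq_sym; case: (i1 == c); rewrite ?mulr1 ?mulr0.
have [->|r_ne1] := eqVneq r i1.
  by rewrite tpermR /= mul1r eq_sym; case: (i0 == c).
by rewrite tpermD 1?eq_sym // mul1r.
Qed.

Lemma std_sigma_sqr :
  std_sigma n i *m std_sigma n i =
  diag_mx (\row_r (if (r == i :> nat) || (r == i.+1 :> nat) then tK else 1)).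
Proof.
apply/matrixP => r c; rewrite !mxE (bigD1 (tperm i0 i1 r)) //= big1 => [|k k_ne].
  rewrite !std_sigmaE tpermK eqxx mulr1 addr0 mulrA mulr_natr; congr (_ *+ _).
  rewrite -[i.+1]/(val i1) -[i]/(val i0) !val_eqE /d.
  have [->|r_ne0] := eqVneq r i0; first by rewrite tpermL eq_sym (negbTE i0_neq_i1) mulr1.
  have [->|r_ne1] := eqVneq r i1; first by rewrite tpermR eqxx mul1r.
  by rewrite tpermD 1?eq_sym // eq_sym (negbTE r_ne0) mul1r.
by rewrite std_sigmaE eq_sym (negbTE k_ne) mulr0 mul0r.
Qed.

End StdSigmaSquare.

Lemma std_sigma_sqrC n i j : (i.+1 < n)%N -> (j.+1 < n)%N ->
  (std_sigma n i *m std_sigma n i) *m (std_sigma n j *m std_sigma n j) =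
  (std_sigma n j *m std_sigma n j) *m (std_sigma n i *m std_sigma n i).
Proof. by move=> lt_i1n lt_j1n; rewrite !std_sigma_sqr // diag_mxC. Qed.

Definition sig_sq (i : nat) : seq letter := [:: ltr (Sig i); ltr (Sig i)].

Lemma word_mx_cat n (T : nat -> 'M[Kt]_n) u v :
  word_mx T (u ++ v) = word_mx T u *m word_mx T v.
Proof. by elim: u => [|x u IHu] /=; rewrite ?mul1mx // IHu mulmxA. Qed.

Lemma word_mx_sig_sq n (T : nat -> 'M[Kt]_n) i :
  word_mx T (sig_sq i) = std_sigma n i *m std_sigma n i.
Proof. by rewrite /= mulmx1. Qed.

Lemma word_mx_sig_sqC n (T : nat -> 'M[Kt]_n) i j :
  (i.+1 < n)%N -> (j.+1 < n)%N ->
  word_mx T (sig_sq i ++ sig_sq j) = word_mx T (sig_sq j ++ sig_sq i).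
Proof. by move=> *; rewrite !word_mx_cat !word_mx_sig_sq std_sigma_sqrC. Qed.

(** Unreduced Burau at t = -1: σ_i acts on the coordinates i, i+1 by the
    matrix [[2, -1], [1, 0]].  [letter_act] only looks at the index of a
    generator, so τ_i acts as σ_i. *)
Definition burau_sig (i : nat) (f : nat -> int) : nat -> int := fun k =>
  if k == i then 2 * f i - f i.+1 else if k == i.+1 then f i else f k.

Definition burau_sigV (i : nat) (f : nat -> int) : nat -> int := fun k =>
  if k == i then f i.+1 else if k == i.+1 then 2 * f i.+1 - f i else f k.

Definition letter_act (x : letter) : (nat -> int) -> nat -> int :=
  if x.2 then burau_sigV (gidx x.1) else burau_sig (gidx x.1).

Definition word_act (w : seq letter) (f : nat -> int) : nat -> int :=
  foldr letter_act f w.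

Lemma word_act_cat u v f : word_act (u ++ v) f = word_act u (word_act v f).
Proof. exact: foldr_cat. Qed.

Lemma letter_act_ext x f g : f =1 g -> letter_act x f =1 letter_act x g.
Proof. by move=> fg k; rewrite /letter_act /burau_sig /burau_sigV; case: x.2; rewrite !fg. Qed.

Lemma word_act_ext u f g : f =1 g -> word_act u f =1 word_act u g.
Proof. by elim: u => //= x u IHu fg; apply/letter_act_ext/IHu. Qed.

Lemma sb_rel_act n w w' : sb_rel n w w' -> forall f, word_act w f =1 word_act w' f.
Proof.
case=> [[g []] _|i _|i j _ _ /orP far_ij|i j _ _ /orP far_ij|i j _ _ /orP far_ij|i _|i _|i _]
  f k; rewrite /word_act /= /letter_act /ltr /linv /= /burau_sig /burau_sigV;
  repeat match goal with |- context [?a == ?b] => case: (@eqP nat a b) => ? end;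
  subst; lia.
Qed.

Lemma sb_eq_act n w w' : sb_eq n w w' -> forall f, word_act w f =1 word_act w' f.
Proof.
elim=> [u v w0 w0' /sb_rel_act rel_w0|//|w0 w0' _ IH f k|w1 w2 w3 _ IH12 _ IH23 f k].
- by move=> f; rewrite !word_act_cat; apply: word_act_ext; apply: rel_w0.
- by rewrite IH.
- by rewrite IH12 IH23.
Qed.

Lemma sig_sq_noncomm n : ~ sb_eq n (sig_sq 0 ++ sig_sq 1) (sig_sq 1 ++ sig_sq 0).
Proof.
(* On e₀ the two words give (3, 2, 0, …) and (3, 6, 4, …). *)
by move=> /sb_eq_act /(_ (fun k => (k == 0)%:R) 1%N).
Qed.

Local Close Scope ring_scope.

Theorem theorem4p4 (n : nat) (T : nat -> 'M[Kt]_n) :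
  3 <= n -> extends_std_rep T -> ~ faithful_rep T.
Proof.
move=> n_ge3 _ faithful; apply: (@sig_sq_noncomm n); apply: faithful.
1,2: by rewrite /valid_word /= !(leq_trans _ n_ge3).
by apply: word_mx_sig_sqC; apply: leq_trans n_ge3.
Qed.
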